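(* Let $G_n$ and $T$ be as in the context, and let $k\geq n+2$. Let $W=v_0e_0v_1e_1\cdots e_{k-1}v_k$ be a walk in $T$ (so each $e_i$ is an arc of $T$ from $v_i$ to $v_{i+1}$). Then $l(e_0)\leq l(e_{n+1})$, where $l(e)$ denotes the label of the arc $e$.
   Context: Let $A$ be a finite alphabet with a linear order $<$, extended to the lexicographic order on words. Let $\mathcal{F}$ be a set of words over $A$ (forbidden words). A word $w$ is in the language if the bi-infinite periodic sequence $\cdots www\cdots$ contains no element of $\mathcal{F}$ as a factor; $W_k$ denotes the set of words of length $k$ in the language. Fix $n\geq 1$ and consider the digraph with vertex set $A^n$ and arcs $(as,sb)$ for $a,b\in A$, $s\in A^{n-1}$, $asb\in W_{n+1}$, the label of $(as,sb)$ being $b$. The de Bruijn graph of span $n$, $G_n$, is a strongly connected component of maximum size of this digraph; vertices are identified with their words. Let $m$ be the vertex of $G_n$ whose word is lexicographically largest. For each vertex $v$, let $e(v)$ be the arc of $G_n$ with tail $v$ having maximum label. $T$ is the spanning subgraph of $G_n$ with arc set $\{e(v): v\in V(G_n), v\neq m\}$. *)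

From HB Require Import structures.
From mathcomp Require Import all_boot all_order.
From Stdlib Require Import Relations.
Set Implicit Arguments. Unset Strict Implicit. Unset Printing Implicit Defensive.
Import Order.TTheory.
Local Open Scope order_scope.

Section DeBruijn.
Variables (d : Order.disp_t) (A : finOrderType d).

(* u is a factor of the bi-infinite periodic word ...www... *)
Definition per_factor (u w : seq A) : Prop :=
  exists i : nat, forall j : nat, j < size u ->
    onth u j = onth w ((i + j) %% size w).

Definition in_lang (F : seq A -> Prop) (w : seq A) : Prop :=
  0 < size w /\ forall u, F u -> ~ per_factor u w.

Variables (F : seq A -> Prop) (n : nat).

(* Arcs of the digraph on A^n are the words asb in W_(n+1):
   tail = as = take n w, head = sb = behead w, label = b = last letter. *)
Definition arc_tail (w : (n.+1).-tuple A) : seq A := take n w.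
Definition arc_head (w : (n.+1).-tuple A) : seq A := behead w.
Definition arc_label (w : (n.+1).-tuple A) : A := tnth w ord_max.

Definition db_adj (u v : n.-tuple A) : Prop :=
  exists w : (n.+1).-tuple A,
    in_lang F w /\ arc_tail w = u /\ arc_head w = v.

Definition db_reach : relation (n.-tuple A) := clos_refl_trans _ db_adj.

Definition is_scc (S : {set n.-tuple A}) : Prop :=
  exists x, forall y, y \in S <-> (db_reach x y /\ db_reach y x).

Definition is_Gn (S : {set n.-tuple A}) : Prop :=
  is_scc S /\ forall S', is_scc S' -> #|S'| <= #|S|.

Definition Gn_arc (S : {set n.-tuple A}) (w : (n.+1).-tuple A) : Prop :=
  in_lang F w /\
  (exists2 u, u \in S & arc_tail w = u) /\
  (exists2 v, v \in S & arc_head w = v).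

Definition is_lex_max (S : {set n.-tuple A}) (m : n.-tuple A) : Prop :=
  m \in S /\ forall v, v \in S -> (val v : seqlexi A) <= (val m : seqlexi A).

Definition T_arc (S : {set n.-tuple A}) (m : n.-tuple A)
    (w : (n.+1).-tuple A) : Prop :=
  Gn_arc S w /\ arc_tail w <> val m /\
  forall w', Gn_arc S w' -> arc_tail w' = arc_tail w ->
    arc_label w' <= arc_label w.

End DeBruijn.

(* The letter read on the first arc of the walk is carried, one position per
   step, to the front of [e n]; rotating [e n] by one therefore gives an arc
   with the same tail as [e (n+1)] and label [l(e 0)].  Since the language is
   closed under rotation, the rotations of [e n] trace a closed walk through
   that tail, so the head of the rotated arc lies in the same strongly
   connected component [G_n]; the rotated arc is thus an arc of [G_n], and the
   maximality of the label of [e (n+1)] among the arcs leaving its tail gives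
   [l(e 0) <= l(e (n+1))]. *)
From HB Require Import structures.
From mathcomp Require Import all_boot all_order.
From Stdlib Require Import Relations.
Set Implicit Arguments.
Unset Strict Implicit.
Unset Printing Implicit Defensive.
Import Order.TTheory.
Local Open Scope order_scope.

Section Rotation.
Variables (d : Order.disp_t) (A : finOrderType d).

Lemma onth_rot1 (w : seq A) j : (j < size w)%N ->
  onth (rot 1 w) j = onth w ((j + 1) %% size w).
Proof.
case: w => [//|x w] /= ltjw.
rewrite rot1_cons -cats1 onth_cat; case: ltnP => [ltjw'|lewj].
  by rewrite modn_small ?addn1.
have -> : j = size w by apply/eqP; rewrite eqn_leq lewj -ltnS ltjw.
by rewrite subnn addn1 modnn.
Qed.

Lemma per_factor_rot1 (u w : seq A) : (0 < size w)%N ->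
  per_factor u (rot 1 w) -> per_factor u w.
Proof.
move=> w_gt0 [i Hi]; exists (i + 1)%N => j ltju.
by rewrite Hi // size_rot onth_rot1 ?ltn_mod // modnDml addnAC.
Qed.

Lemma in_lang_rot (F : seq A -> Prop) (w : seq A) j :
  in_lang F w -> in_lang F (rot j w).
Proof.
move=> Fw; rewrite rot_minn.
elim: (minn j (size w)) (geq_minr j (size w)) => [|i IHi] lei; first by rewrite rot0.
rewrite rotS //; have [w_gt0 Fok] := IHi (ltnW lei).
split=> [|u Fu /per_factor_rot1]; first by rewrite size_rot.
by move=> /(_ w_gt0); apply: Fok.
Qed.

Variables (F : seq A -> Prop) (n : nat).

Definition rot_head (j : nat) (w : (n.+1).-tuple A) : n.-tuple A :=
  behead_tuple (rot_tuple j w).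

Lemma take_rot1 (s : seq A) : size s = n.+1 -> take n (rot 1 s) = behead s.
Proof. by case: s => [//|x s] [sz_s]; rewrite rot1_cons -cats1 -sz_s take_size_cat. Qed.

Lemma nth_rot1_last x0 (s : seq A) : size s = n.+1 -> nth x0 (rot 1 s) n = head x0 s.
Proof. by case: s => [//|x s] [sz_s]; rewrite rot1_cons -cats1 nth_cat sz_s ltnn subnn. Qed.

Lemma arc_tail_rot1 (w : (n.+1).-tuple A) : arc_tail (rot_tuple 1 w) = behead w.
Proof. exact/take_rot1/size_tuple. Qed.

Lemma arc_label_rot1 (w : (n.+1).-tuple A) : arc_label (rot_tuple 1 w) = thead w.
Proof.
by rewrite /arc_label /thead !(tnth_nth (thead w)) /= nth_rot1_last ?size_tuple.
Qed.

Lemma db_adj_rot_head (w : (n.+1).-tuple A) j : in_lang F w -> (j <= n)%N ->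
  db_adj F (rot_head j w) (rot_head j.+1 w).
Proof.
move=> Fw lejn; exists (rot_tuple j.+1 w); split; first exact: in_lang_rot.
split=> //.
by rewrite /arc_tail /= rotS ?size_tuple // take_rot1 // size_rot size_tuple.
Qed.

Lemma db_reach_rot_head (w : (n.+1).-tuple A) i j : in_lang F w ->
  (i <= j <= n.+1)%N -> db_reach F (rot_head i w) (rot_head j w).
Proof.
move=> Fw; elim: j => [|j IHj] /andP[leij lejn].
  by rewrite leqn0 in leij; rewrite (eqP leij); apply: rt_refl.
case: (ltngtP i j.+1) leij => // [ltij _|-> _]; last exact: rt_refl.
apply: (@rt_trans _ _ _ (rot_head j w)); last exact/rt_step/db_adj_rot_head.
by apply: IHj; rewrite -ltnS ltij ltnW.
Qed.

Lemma rot_head_size (w : (n.+1).-tuple A) : val (rot_head n.+1 w) = behead w.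
Proof. by rewrite /= -{1}(size_tuple w) rot_size. Qed.

End Rotation.

Lemma scc_reach_closed d (A : finOrderType d) (F : seq A -> Prop) n
    (S : {set n.-tuple A}) u v :
  is_scc F S -> u \in S -> db_reach F u v -> db_reach F v u -> v \in S.
Proof.
case=> x memS /memS[xu ux] uv vu; apply/memS; split.
- exact: rt_trans xu uv.
- exact: rt_trans vu ux.
Qed.

Section Walk.
Variables (d : Order.disp_t) (A : finOrderType d) (n k : nat).
Variable e : nat -> (n.+1).-tuple A.
Hypothesis walk : forall i, (i.+1 < k)%N -> arc_head (e i) = arc_tail (e i.+1).

Lemma walk_nth_shift x0 i j : (i.+1 < k)%N -> (j < n)%N ->
  nth x0 (e i.+1) j = nth x0 (e i) j.+1.
Proof.
move=> ltik ltjn.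
by rewrite -(nth_take x0 ltjn) -[take n _]/(arc_tail _) -walk // nth_behead.
Qed.

Lemma walk_thead : (n < k)%N -> thead (e n) = arc_label (e 0).
Proof.
move=> ltnk; pose x0 := thead (e n).
suff shift i : (i <= n)%N -> nth x0 (e i) (n - i) = nth x0 (e 0) n.
  by rewrite /arc_label /thead !(tnth_nth x0) -(shift n) ?subnn.
elim: i => [|i IHi] lein; first by rewrite subn0.
rewrite walk_nth_shift ?subnSK -?IHi ?leq_subr //; first exact: ltnW.
exact: leq_ltn_trans lein ltnk.
Qed.

End Walk.

Theorem lemma2 (d : Order.disp_t) (A : finOrderType d) (F : seq A -> Prop)
    (n : nat) (hn : (1 <= n)%N)
    (S : {set n.-tuple A}) (hS : is_Gn F S)
    (m : n.-tuple A) (hm : is_lex_max S m)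
    (k : nat) (hk : (n.+2 <= k)%N)
    (e : nat -> (n.+1).-tuple A)
    (he : forall i, (i < k)%N -> T_arc F S m (e i))
    (hwalk : forall i, (i.+1 < k)%N -> arc_head (e i) = arc_tail (e i.+1)) :
  arc_label (e 0%N) <= arc_label (e n.+1).
Proof.
set w := e n; set r := rot_tuple 1 w.
have [[Fw _] _] := he n (ltnW hk).
have [[_ [[u Su tail_u] _]] [_ label_max]] := he n.+1 hk.
have head_w : behead w = u by rewrite -tail_u -hwalk.
have tail_r : arc_tail r = u by rewrite arc_tail_rot1.
have head_r : rot_head 1 w \in S.
  apply: scc_reach_closed hS.1 Su _ _.
  - by apply: rt_step; exists r; split; first exact: in_lang_rot.
  - have u_eq : rot_head n.+1 w = u by apply: val_inj; rewrite rot_head_size.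
    by rewrite -u_eq; apply: db_reach_rot_head; rewrite ?leqnn.
have Gn_r : Gn_arc F S r.
  by split; [exact: in_lang_rot | split; [exists u | exists (rot_head 1 w)]].
rewrite -(walk_thead hwalk (ltnW hk)) -arc_label_rot1.
by apply: label_max => //; rewrite tail_r tail_u.
Qed.
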